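(* Let $G$ be a $K_4$-minor-free graph and $X$ a set of three vertices of $G$. If there is a proper $3$-coloring $\phi$ of $G$ with $|\phi(X)|=2$, then $X$ is feasible.
   Context: For $n\in\mathbb{N}$, the chain of diamonds $D_n$ is the graph with vertex set $\{u_i,v_i,w_i:i\in[n]\}\cup\{u_0\}$ and edge set $\{u_{i-1}v_i,u_{i-1}w_i,v_iw_i,v_iu_i,w_iu_i: i\in[n]\}$; let $U(D_n)=\{u_0,\dots,u_n\}$. A set $X$ of distinct vertices of $G$ is connected by a chain of diamonds if there exist $n\in\mathbb{N}$ and a graph homomorphism $\varphi:D_n\to G$ with $X\subseteq\varphi(U(D_n))$. A set $X$ of three distinct vertices of $G$ is feasible if $X$ is not connected by a chain of diamonds and there is a proper $3$-coloring $\phi$ of $G$ with $|\phi(X)|\le 2$. *)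

From mathcomp Require Import all_boot.
Set Implicit Arguments. Unset Strict Implicit. Unset Printing Implicit Defensive.

Definition simple_graph (T : finType) (e : rel T) : Prop :=
  symmetric e /\ irreflexive e.

Definition induced_connected (T : finType) (e : rel T) (B : {set T}) : Prop :=
  forall x y, x \in B -> y \in B ->
    connect [rel a b | [&& e a b, a \in B & b \in B]] x y.

Definition has_K4_minor (T : finType) (e : rel T) : Prop :=
  exists B : 'I_4 -> {set T},
    (forall i, B i != set0) /\
    (forall i, induced_connected e (B i)) /\
    (forall i j, i != j -> [disjoint B i & B j]) /\
    (forall i j, i != j -> exists x y, [/\ x \in B i, y \in B j & e x y]).

Definition K4_minor_free (T : finType) (e : rel T) : Prop := ~ has_K4_minor e.

Definition proper_3coloring (T : finType) (e : rel T) (phi : T -> 'I_3) : Prop :=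
  forall x y, e x y -> phi x != phi y.

(* A graph homomorphism D_n -> G, encoded by the images u i (0 <= i <= n),
   v i, w i (1 <= i <= n) of the vertices u_i, v_i, w_i (values of the
   functions at other indices are irrelevant). *)
Definition diamond_chain_hom (T : finType) (e : rel T) (n : nat)
  (u v w : nat -> T) : Prop :=
  forall i, 1 <= i <= n ->
    [/\ e (u i.-1) (v i), e (u i.-1) (w i), e (v i) (w i),
        e (v i) (u i) & e (w i) (u i)].

Definition connected_by_chain_of_diamonds (T : finType) (e : rel T)
  (X : {set T}) : Prop :=
  exists n (u v w : nat -> T),
    diamond_chain_hom e n u v w /\
    (forall x, x \in X -> exists2 i, i <= n & u i = x).

Definition feasible (T : finType) (e : rel T) (X : {set T}) : Prop :=
  #|X| = 3 /\ ~ connected_by_chain_of_diamonds e X /\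
  exists phi : T -> 'I_3, proper_3coloring e phi /\ #|phi @: X| <= 2.

(* The two tips of a diamond receive the same colour under every proper
   3-colouring: the middle edge uses the other two colours.  Hence the spine
   u_0, ..., u_n of a chain of diamonds is monochromatic, so a set covered by
   it gets a single colour, which is impossible when |phi(X)| = 2. *)
From mathcomp Require Import all_boot.

Set Implicit Arguments. Unset Strict Implicit. Unset Printing Implicit Defensive.

Lemma ord3_third (a b c d : 'I_3) :
  a != b -> a != c -> b != c -> d != b -> d != c -> d = a.
Proof.
move: a b c d; do 4 (case=> [[|[|[|?]]] ?]) => //=.
all: by move=> *; apply/val_inj.
Qed.

Section ProperThreeColoring.

Variables (T : finType) (e : rel T) (phi : T -> 'I_3).
Hypothesis phi_proper : proper_3coloring e phi.

Lemma proper_3coloring_diamond x v w y :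
  e x v -> e x w -> e v w -> e v y -> e w y -> phi y = phi x.
Proof.
move=> exv exw evw evy ewy.
apply: (ord3_third (phi_proper exv) (phi_proper exw) (phi_proper evw)).
all: by rewrite eq_sym; apply: phi_proper.
Qed.

Lemma diamond_chain_hom_spine_color n u v w :
  diamond_chain_hom e n u v w -> forall i, i <= n -> phi (u i) = phi (u 0).
Proof.
move=> hom; elim=> [//|i IHi] lt_i_n.
have /hom [e1 e2 e3 e4 e5] : 1 <= i.+1 <= n by [].
by rewrite (proper_3coloring_diamond e1 e2 e3 e4 e5) IHi // ltnW.
Qed.

Lemma connected_by_chain_of_diamonds_color (X : {set T}) :
  connected_by_chain_of_diamonds e X -> #|phi @: X| <= 1.
Proof.
case=> n [u [v [w [hom coverX]]]].
rewrite -[X in _ <= X](cards1 (phi (u 0))).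
apply/subset_leq_card/subsetP => _ /imsetP[x xX ->].
have [i le_i_n <-] := coverX x xX.
by rewrite in_set1 (diamond_chain_hom_spine_color hom le_i_n).
Qed.

End ProperThreeColoring.

Theorem mainTheorem8 (T : finType) (e : rel T) (X : {set T}) :
  simple_graph e -> K4_minor_free e -> #|X| = 3 ->
  (exists phi : T -> 'I_3, proper_3coloring e phi /\ #|phi @: X| = 2) ->
  feasible e X.
Proof.
move=> _ _ cardX [phi [phi_proper cardphiX]].
split=> //; split; last by exists phi; rewrite cardphiX.
move/(connected_by_chain_of_diamonds_color phi_proper).
by rewrite cardphiX.
Qed.
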